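(* Consider, for $x> 0$, the planar piecewise-smooth system $$\dot x=1,\qquad \dot y=-ay-\sin\!\left[\pi x\left(1+\tfrac12\lambda\right)\right],$$ with $a>0$, where $\lambda=\operatorname{sign}(y)$ for $y\neq0$ and $\lambda\in(-1,1)$ for $y=0$. Then its sliding manifold is $$\Lambda^{N}=\left\{(x,0)\in\mathbb{R}^2:\ x\in\left(\tfrac{2n}{3},\,2n\right),\ n\in\mathbb{N}\setminus\{0\}\right\}.$$
   Context: The sliding manifold is the set of points $(x,0)$ on the switching line $y=0$ for which there exists $\lambda\in(-1,1)$ with $\sin\!\left[\pi x\left(1+\tfrac12\lambda\right)\right]=0$, i.e. points where a motion $y\equiv0$, $\dot x=1$ along the switching line is possible. *)

From Stdlib Require Import Reals.
Open Scope R_scope.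

Definition ydot (a x y lam : R) : R := - a * y - sin (PI * x * (1 + lam / 2)).

(* Sliding manifold (as defined in the paper): the points (x,0), x > 0, of the
   switching line y = 0 for which some lambda in (-1,1) makes the motion
   y == 0, x' = 1 possible, i.e. sin(pi x (1 + lambda/2)) = 0
   (equivalently, ydot a x 0 lam = 0). *)
Definition sliding_manifold (a : R) (p : R * R) : Prop :=
  0 < fst p /\ snd p = 0 /\
  exists lam : R, -1 < lam < 1 /\ sin (PI * fst p * (1 + lam / 2)) = 0.

(* sin (pi t) vanishes exactly at integers t, and as lambda runs over (-1,1)
   the argument x (1 + lambda/2) runs over the open interval (x/2, 3x/2).
   So (x,0) slides iff some integer n satisfies x/2 < n < 3x/2, i.e.
   2n/3 < x < 2n; such an n is positive because x is. *)
From Stdlib Require Import Reals Lra Lia ZArith.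
Open Scope R_scope.

Lemma sin_PI_mul_eq_0 (t : R) : sin (PI * t) = 0 <-> exists k : Z, t = IZR k.
Proof.
  split.
  - intros h; destruct (sin_eq_0_0 _ h) as [k hk]; exists k.
    apply (Rmult_eq_reg_l PI); [rewrite hk; ring | exact PI_neq0].
  - intros [k ->]; apply sin_eq_0_1; exists k; ring.
Qed.

Lemma scaled_open_interval (x c : R) : 0 < x ->
  (exists lam : R, -1 < lam < 1 /\ x * (1 + lam / 2) = c) <-> x / 2 < c < 3 * x / 2.
Proof.
  intros hx; split.
  - intros [lam [hlam <-]]; split; nra.
  - intros hc; exists (2 * (c / x - 1)).
    assert (hcx : c / x * x = c) by (field; lra).
    assert (lo : 1 / 2 < c / x) by (apply (Rmult_lt_reg_r x); lra).
    assert (hi : c / x < 3 / 2) by (apply (Rmult_lt_reg_r x); lra).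
    split; [lra | field; lra].
Qed.

Lemma integer_in_scaled_interval (x : R) : 0 < x ->
  (exists k : Z, x / 2 < IZR k < 3 * x / 2) <->
  (exists n : nat, (1 <= n)%nat /\ 2 * INR n / 3 < x < 2 * INR n).
Proof.
  intros hx; split.
  - intros [k hk].
    assert (hk0 : (0 < k)%Z) by (apply lt_0_IZR; lra).
    exists (Z.to_nat k); rewrite INR_IZR_INZ, Z2Nat.id by lia.
    split; [lia | lra].
  - intros [n [_ hn]]; exists (Z.of_nat n); rewrite <- INR_IZR_INZ; lra.
Qed.

Lemma sliding_parameter_iff (x : R) : 0 < x ->
  (exists lam : R, -1 < lam < 1 /\ sin (PI * x * (1 + lam / 2)) = 0) <->
  (exists k : Z, x / 2 < IZR k < 3 * x / 2).
Proof.
  intros hx; split.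
  - intros [lam [hlam hs]]; rewrite Rmult_assoc, sin_PI_mul_eq_0 in hs.
    destruct hs as [k hk]; exists k.
    apply scaled_open_interval; [exact hx | exists lam; auto].
  - intros [k hk]; apply scaled_open_interval in hk as [lam [hlam hk]]; [|exact hx].
    exists lam; split; [exact hlam|].
    rewrite Rmult_assoc, sin_PI_mul_eq_0; exists k; exact hk.
Qed.

Theorem proposition2 (a : R) (ha : 0 < a) :
  forall p : R * R,
    sliding_manifold a p <->
    (snd p = 0 /\
     exists n : nat, (1 <= n)%nat /\
       2 * INR n / 3 < fst p < 2 * INR n).
Proof.
  intros [x y]; unfold sliding_manifold; simpl; split.
  - intros [hx [hy hlam]]; split; [exact hy|].
    apply integer_in_scaled_interval, sliding_parameter_iff; assumption.
  - intros [hy hn].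
    assert (hx : 0 < x) by (destruct hn as [n [hn1 hn]]; apply lt_0_INR in hn1; lra).
    split; [exact hx | split; [exact hy|]].
    apply sliding_parameter_iff, integer_in_scaled_interval; assumption.
Qed.
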